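(* Let $p$ be a propositional symbol. The formula $\Diamond p\to\Diamond(p\wedge\Box\neg p)$ is not valid in $\mathsf{BIGL}$: there is a model $\mathcal B\in\mathsf{BIGL}$ and a world $w$ with $\mathcal B,w\not\models\Diamond p\to\Diamond(p\wedge\Box\neg p)$. Consequently $\mathsf{labIGL}\not\vdash x:\Diamond p\to\Diamond(p\wedge\Box\neg p)$.
   Context: $\neg A := A\to\bot$. A birelational model $\mathcal B=(W,\le,R^{\mathcal B},V)$: nonempty $W$, partial order $\le$, $R^{\mathcal B}\subseteq W^2$ with (F1) if $w\le w'$ and $wR^{\mathcal B}v$ then $v\le v'$ and $w'R^{\mathcal B}v'$ for some $v'$; (F2) if $wR^{\mathcal B}v$ and $v\le v'$ then $w\le w'$ and $w'R^{\mathcal B}v'$ for some $w'$; $V:W\to\mathcal P(\mathsf{Pr})$ monotone in $\le$. Satisfaction: $w\models p$ iff $p\in V(w)$; $\bot$ never; $\wedge,\vee$ pointwise; $w\models A\to B$ iff for all $w'\ge w$, $w'\models A$ implies $w'\models B$; $w\models\Box A$ iff for all $w'\ge w$ and $v$ with $w'R^{\mathcal B}v$, $v\models A$; $w\models\Diamond A$ iff some $v$ with $wR^{\mathcal B}v$ satisfies $A$. $\mathsf{BIGL}$: birelational models with $R^{\mathcal B}$ transitive and no infinite chain $x_1\le y_1R^{\mathcal B}x_2\le y_2R^{\mathcal B}\cdots$. $\mathsf{labIGL}$: the class of $\infty$-proofs of $\mathsf{labIK4}$, the single-succedent restriction of the labelled calculus $\mathsf{labK4}$ (Gentzen-style rules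 on labelled formulas $x:A$ with relational atoms $xRy$, modal rules $\Box$R: $\mathcal R,xRy,\Gamma\Rightarrow y:A$ / $\mathcal R,\Gamma\Rightarrow x:\Box A$ ($y$ fresh), $\Box$L: $\mathcal R,xRy,\Gamma,y:A\Rightarrow C$ / $\mathcal R,xRy,\Gamma,x:\Box A\Rightarrow C$, $\Diamond$L: $\mathcal R,xRy,\Gamma,y:A\Rightarrow C$ / $\mathcal R,\Gamma,x:\Diamond A\Rightarrow C$ ($y$ fresh), $\Diamond$R: $\mathcal R,xRy,\Gamma\Rightarrow y:A$ / $\mathcal R,xRy,\Gamma\Rightarrow x:\Diamond A$, transitivity rule tr, cut, weakening, contraction, thinning, identity on atoms, $\bot$L), where an $\infty$-proof is a possibly infinite derivation tree all of whose infinite branches carry a trace of labels $(x_i)$ with $x_i=x_{i+1}$ or $x_iRx_{i+1}$ in the current relational context, the latter infinitely often. *)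

From Stdlib Require Import List Arith Permutation.
Import ListNotations.

Inductive form : Type :=
| Var : nat -> form
| Bot : form
| And : form -> form -> form
| Or  : form -> form -> form
| Imp : form -> form -> form
| Box : form -> form
| Dia : form -> form.

Definition Neg (A : form) : form := Imp A Bot.

Record bmodel : Type := BModel {
  W : Type;
  le : W -> W -> Prop;
  rel : W -> W -> Prop;
  val : W -> nat -> Prop
}.

Definition is_birelational (M : bmodel) : Prop :=
  inhabited (W M) /\
  (forall w, le M w w) /\
  (forall u v w, le M u v -> le M v w -> le M u w) /\
  (forall u v, le M u v -> le M v u -> u = v) /\
  (forall w w' v, le M w w' -> rel M w v ->
     exists v', le M v v' /\ rel M w' v') /\
  (forall w v v', rel M w v -> le M v v' ->
     exists w', le M w w' /\ rel M w' v') /\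
  (forall w w' p, le M w w' -> val M w p -> val M w' p).

Definition is_BIGL (M : bmodel) : Prop :=
  is_birelational M /\
  (forall u v w, rel M u v -> rel M v w -> rel M u w) /\
  ~ (exists x y : nat -> W M,
       forall i, le M (x i) (y i) /\ rel M (y i) (x (S i))).

Fixpoint sat (M : bmodel) (w : W M) (A : form) : Prop :=
  match A with
  | Var p => val M w p
  | Bot => False
  | And A B => sat M w A /\ sat M w B
  | Or A B => sat M w A \/ sat M w B
  | Imp A B => forall w', le M w w' -> sat M w' A -> sat M w' B
  | Box A => forall w' v, le M w w' -> rel M w' v -> sat M v A
  | Dia A => exists v, rel M w v /\ sat M v A
  end.

Definition label := nat.
Definition lform : Type := (label * form)%type.
Definition ratom : Type := (label * label)%type.

(* A sequent  R, Gamma => x:C  (contexts as lists; exchange is a rule). *)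
Record sequent : Type := Seq {
  srel : list ratom;
  sctx : list lform;
  sgoal : lform
}.

Definition occurs (x : label) (s : sequent) : Prop :=
  (exists r, In r (srel s) /\ (fst r = x \/ snd r = x)) \/
  (exists a, In a (sctx s) /\ fst a = x) \/
  fst (sgoal s) = x.

Inductive rule : list sequent -> sequent -> Prop :=
| r_exch : forall R R' G G' c,
    Permutation R R' -> Permutation G G' ->
    rule [Seq R' G' c] (Seq R G c)
| r_weak : forall R G a c,
    rule [Seq R G c] (Seq R (a :: G) c)
| r_thin : forall R G r c,
    rule [Seq R G c] (Seq (r :: R) G c)
| r_contr : forall R G a c,
    rule [Seq R (a :: a :: G) c] (Seq R (a :: G) c)
| r_contr_rel : forall R G r c,
    rule [Seq (r :: r :: R) G c] (Seq (r :: R) G c)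
| r_cut : forall R G a c,
    rule [Seq R G a; Seq R (a :: G) c] (Seq R G c)
| r_tr : forall R G x y z c,
    rule [Seq ((x, z) :: (x, y) :: (y, z) :: R) G c]
         (Seq ((x, y) :: (y, z) :: R) G c)
| r_id : forall R G x p,
    rule [] (Seq R ((x, Var p) :: G) (x, Var p))
| r_botL : forall R G x c,
    rule [] (Seq R ((x, Bot) :: G) c)
| r_andL : forall R G x A B c,
    rule [Seq R ((x, A) :: (x, B) :: G) c] (Seq R ((x, And A B) :: G) c)
| r_andR : forall R G x A B,
    rule [Seq R G (x, A); Seq R G (x, B)] (Seq R G (x, And A B))
| r_orL : forall R G x A B c,
    rule [Seq R ((x, A) :: G) c; Seq R ((x, B) :: G) c]
         (Seq R ((x, Or A B) :: G) c)
| r_orR1 : forall R G x A B,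
    rule [Seq R G (x, A)] (Seq R G (x, Or A B))
| r_orR2 : forall R G x A B,
    rule [Seq R G (x, B)] (Seq R G (x, Or A B))
| r_impL : forall R G x A B c,
    rule [Seq R G (x, A); Seq R ((x, B) :: G) c]
         (Seq R ((x, Imp A B) :: G) c)
| r_impR : forall R G x A B,
    rule [Seq R ((x, A) :: G) (x, B)] (Seq R G (x, Imp A B))
| r_boxR : forall R G x y A,
    ~ occurs y (Seq R G (x, Box A)) ->
    rule [Seq ((x, y) :: R) G (y, A)] (Seq R G (x, Box A))
| r_boxL : forall R G x y A c,
    rule [Seq ((x, y) :: R) ((y, A) :: G) c]
         (Seq ((x, y) :: R) ((x, Box A) :: G) c)
| r_diaL : forall R G x y A c,
    ~ occurs y (Seq R ((x, Dia A) :: G) c) ->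
    rule [Seq ((x, y) :: R) ((y, A) :: G) c] (Seq R ((x, Dia A) :: G) c)
| r_diaR : forall R G x y A,
    rule [Seq ((x, y) :: R) G (y, A)] (Seq ((x, y) :: R) G (x, Dia A)).

(* Nodes are addressed by positions: lists of child indices, the most
   recent choice at the head ([i :: p] is the i-th child of [p]). *)
Record ptree : Type := PTree {
  node : list nat -> sequent;
  nchildren : list nat -> nat
}.

Fixpoint valid_pos (T : ptree) (p : list nat) : Prop :=
  match p with
  | [] => True
  | i :: q => valid_pos T q /\ i < nchildren T q
  end.

Definition locally_correct (T : ptree) : Prop :=
  forall p, valid_pos T p ->
    rule (map (fun i => node T (i :: p)) (seq 0 (nchildren T p))) (node T p).

Fixpoint branch_pos (b : nat -> nat) (n : nat) : list nat :=
  match n with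
  | 0 => []
  | S m => b m :: branch_pos b m
  end.

Definition is_branch (T : ptree) (b : nat -> nat) : Prop :=
  forall n, b n < nchildren T (branch_pos b n).

Definition has_trace (T : ptree) (b : nat -> nat) : Prop :=
  let s := fun n => node T (branch_pos b n) in
  exists (k : nat) (x : nat -> label),
    (forall n, k <= n -> occurs (x n) (s n)) /\
    (forall n, k <= n ->
        x (S n) = x n \/ In (x n, x (S n)) (srel (s (S n)))) /\
    (forall m, exists n, m <= n /\ k <= n /\
        In (x n, x (S n)) (srel (s (S n)))).

Definition inf_proof (T : ptree) : Prop :=
  locally_correct T /\ forall b, is_branch T b -> has_trace T b.

Definition labIGL_provable (s : sequent) : Prop :=
  exists T, inf_proof T /\ node T [] = s.

Definition phi16 (p : nat) : form :=
  Imp (Dia (Var p)) (Dia (And (Var p) (Box (Neg (Var p))))).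

From Stdlib Require Import List Arith Permutation Classical ClassicalEpsilon Lia.
Import ListNotations.

(* The countermodel has five worlds: a root w with successor v,
   their ≤-upgrades w+ and v+, and a top world u with w+ R v+ R u and w+ R u;
   every atom holds exactly at v, v+ and u.  At w, <>p holds via v, but v is
   the only R-successor of w and v ≤ v+ R u with u |= p, so v |/= []~p.
   BIGL-ness follows from a depth function that drops along R and does not
   grow along ≤ (no x1 ≤ y1 R x2 ≤ ... can then be infinite).

   For the calculus we prove a "semantic branch" soundness: in a model with
   such a depth, transitive R, and in which any assignment of labels to
   worlds can be lifted along ≤ at one label, every rule instance whose
   conclusion is refuted by an assignment has a premise refuted by another
   assignment that does not raise the depth of any label of the conclusion.
   Iterating this from a refuted root gives an infinite branch of refuted
   sequents; the trace demanded of an oo-proof would then be a sequence of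
   depths that never increases and decreases infinitely often, which is
   impossible.  The sequent  => x:phi  is refuted by sending every label to w. *)

Lemma no_infinite_descent (g : nat -> nat) (k : nat) :
  (forall n, k <= n -> g (S n) <= g n) ->
  (forall m, exists n, m <= n /\ k <= n /\ g (S n) < g n) -> False.
Proof.
  intros Hle Hlt.
  assert (Hmono : forall m n, k <= m -> m <= n -> g n <= g m).
  { intros m n Hm Hmn; induction Hmn as [|n Hmn IH]; [lia|].
    pose proof (Hle n ltac:(lia)); lia. }
  assert (Hbound : forall N m, k <= m -> g m <= N -> False).
  { induction N as [|N IH]; intros m Hm HN;
      destruct (Hlt m) as [n [Hmn [Hkn Hn]]]; pose proof (Hmono m n Hm Hmn).
    - lia.
    - apply (IH (S n)); lia. }
  exact (Hbound (g k) k (le_n k) (le_n _)).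
Qed.

Lemma sat_persistent (M : bmodel) : is_birelational M ->
  forall A w w', le M w w' -> sat M w A -> sat M w' A.
Proof.
  intros [_ [Hrefl [Htrans [_ [F1 [_ Hval]]]]]].
  induction A; simpl; intros w w' Hle H; eauto.
  - destruct H; split; eauto.
  - destruct H; [left | right]; eauto.
  - destruct H as [v [Hwv Hv]]. destruct (F1 _ _ _ Hle Hwv) as [v' [Hvv' Hw'v']].
    exists v'; split; eauto.
Qed.

Definition update {T : Type} (f : label -> T) (y : label) (v : T) : label -> T :=
  fun z => if Nat.eqb z y then v else f z.

Lemma update_fresh {T : Type} (f : label -> T) y v (s : sequent) :
  ~ occurs y s -> forall z, occurs z s -> update f y v z = f z.
Proof.
  intros Hy z Hz; unfold update.
  destruct (Nat.eqb_spec z y); [subst; contradiction | reflexivity].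
Qed.

Lemma update_at {T : Type} (f : label -> T) y v : update f y v y = v.
Proof. unfold update; now rewrite Nat.eqb_refl. Qed.

Section Refutation.

Variable M : bmodel.
Hypothesis M_birel : is_birelational M.
Hypothesis M_trans : forall u v w, rel M u v -> rel M v w -> rel M u w.

Variable h : W M -> nat.
Hypothesis h_rel : forall u v, rel M u v -> h v < h u.
Hypothesis h_le : forall u v, le M u v -> h v <= h u.

Lemma BIGL_of_depth : is_BIGL M.
Proof.
  split; [exact M_birel | split; [exact M_trans |]].
  intros [x [y Hchain]].
  assert (Hdrop : forall i, h (x (S i)) < h (x i)).
  { intros i; destruct (Hchain i) as [Hle Hrel].
    pose proof (h_le _ _ Hle); pose proof (h_rel _ _ Hrel); lia. }
  apply (no_infinite_descent (fun i => h (x i)) 0).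
  - intros n _; apply Nat.lt_le_incl, Hdrop.
  - intros m; exists m; split; [lia | split; [lia | apply Hdrop]].
Qed.

(* Assignments of labels to worlds can be moved up along ≤ at any one label,
   keeping all R-links between assigned worlds; ->R and []R need this, as
   their goals can only be falsified at a ≤-larger world. *)
Hypothesis lift : forall (f : label -> W M) x w', le M (f x) w' ->
  exists g, g x = w' /\
    (forall a b, rel M (f a) (f b) -> rel M (g a) (g b)) /\
    (forall z, le M (f z) (g z)).

Definition rel_holds (f : label -> W M) (R : list ratom) : Prop :=
  forall a b, In (a, b) R -> rel M (f a) (f b).

Definition ctx_holds (f : label -> W M) (G : list lform) : Prop :=
  forall z A, In (z, A) G -> sat M (f z) A.

Definition refutes (f : label -> W M) (s : sequent) : Prop :=
  rel_holds f (srel s) /\ ctx_holds f (sctx s) /\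
  ~ sat M (f (fst (sgoal s))) (snd (sgoal s)).

Definition no_higher (f f' : label -> W M) (s : sequent) : Prop :=
  forall z, occurs z s -> h (f' z) <= h (f z).

Definition refutes_premise (f : label -> W M) (prems : list sequent) (c : sequent) : Prop :=
  exists s f', In s prems /\ refutes f' s /\ no_higher f f' c.

Lemma refutes_agree (f g : label -> W M) (s : sequent) :
  (forall z, occurs z s -> g z = f z) -> refutes f s -> refutes g s.
Proof.
  destruct s as [R G [x A]]; intros Hfg [HR [HG Hgoal]]; unfold occurs in Hfg; simpl in *.
  repeat split.
  - intros a b Hab; rewrite !Hfg by (left; exists (a, b); simpl; auto); auto.
  - intros z B Hz; rewrite Hfg by (right; left; exists (z, B); auto); auto.
  - rewrite Hfg by (right; right; reflexivity); auto.
Qed.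

Lemma lift_refutation (f : label -> W M) x w' R G :
  le M (f x) w' -> rel_holds f R -> ctx_holds f G ->
  exists g, g x = w' /\ rel_holds g R /\ ctx_holds g G /\
    forall z, h (g z) <= h (f z).
Proof.
  intros Hle HR HG; destruct (lift f x w' Hle) as [g [Hgx [Hgrel Hgle]]].
  exists g; split; [exact Hgx | split; [| split]].
  - intros a b Hab; apply Hgrel, HR, Hab.
  - intros z A Hz; apply (sat_persistent M M_birel A (f z)); auto.
  - intros z; apply h_le, Hgle.
Qed.

Lemma refutes_premise_same (f : label -> W M) s prems c :
  In s prems -> refutes f s -> refutes_premise f prems c.
Proof. intros Hs Hf; exists s, f; split; [exact Hs | split; [exact Hf | intros z _; apply le_n]]. Qed.

Lemma M_le_refl (w : W M) : le M w w.
Proof. destruct M_birel as [_ [Hrefl _]]; apply Hrefl. Qed.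

(* The three rules needing a new assignment: ->R and []R move the principal
   label up along ≤, []R and <>L also assign the fresh label. *)
Lemma impR_refutation f R G x A B :
  refutes f (Seq R G (x, Imp A B)) ->
  refutes_premise f [Seq R ((x, A) :: G) (x, B)] (Seq R G (x, Imp A B)).
Proof.
  intros [HR [HG Hgoal]]; simpl in Hgoal.
  assert (Hwit : exists w', le M (f x) w' /\ sat M w' A /\ ~ sat M w' B).
  { apply NNPP; intro N; apply Hgoal; intros w' Hle HA.
    apply NNPP; intro NB; apply N; eauto. }
  destruct Hwit as [w' [Hle [HA HB]]].
  destruct (lift_refutation f x w' R G Hle HR HG) as [g [Hgx [HgR [HgG Hgh]]]].
  exists (Seq R ((x, A) :: G) (x, B)), g; split; [left; reflexivity |].
  split; [| intros z _; apply Hgh].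
  repeat split; simpl; [exact HgR | | now rewrite Hgx].
  intros z C [E | Hz]; [injection E as <- <-; now rewrite Hgx | apply HgG, Hz].
Qed.

Lemma boxR_refutation f R G x y A :
  ~ occurs y (Seq R G (x, Box A)) -> refutes f (Seq R G (x, Box A)) ->
  refutes_premise f [Seq ((x, y) :: R) G (y, A)] (Seq R G (x, Box A)).
Proof.
  intros Hy [HR [HG Hgoal]]; simpl in Hgoal.
  assert (Hwit : exists w' v, le M (f x) w' /\ rel M w' v /\ ~ sat M v A).
  { apply NNPP; intro N; apply Hgoal; intros w' v Hle Hrel.
    apply NNPP; intro NA; apply N; eauto. }
  destruct Hwit as [w' [v [Hle [Hrel HA]]]].
  destruct (lift_refutation f x w' R G Hle HR HG) as [g [Hgx [HgR [HgG Hgh]]]].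
  set (g' := update g y v).
  assert (Hagree : forall z, occurs z (Seq R G (x, Box A)) -> g' z = g z)
    by exact (update_fresh g y v _ Hy).
  assert (Hg'x : g' x = w') by (rewrite Hagree by (right; right; reflexivity); exact Hgx).
  assert (Hg' : refutes g' (Seq R G (x, Box A))).
  { apply (refutes_agree g _ _ Hagree); repeat split; [exact HgR | exact HgG |].
    simpl; rewrite Hgx; intro Hbox; apply HA, (Hbox w' v (M_le_refl w') Hrel). }
  destruct Hg' as [HR' [HG' _]].
  exists (Seq ((x, y) :: R) G (y, A)), g'; split; [left; reflexivity |].
  split; [| intros z Hz; rewrite Hagree by exact Hz; apply Hgh].
  repeat split; simpl; [| exact HG' | unfold g'; now rewrite update_at].
  intros a b [E | Hab]; [injection E as <- <- | apply HR', Hab].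
  rewrite Hg'x; unfold g'; now rewrite update_at.
Qed.

Lemma diaL_refutation f R G x y A c :
  ~ occurs y (Seq R ((x, Dia A) :: G) c) -> refutes f (Seq R ((x, Dia A) :: G) c) ->
  refutes_premise f [Seq ((x, y) :: R) ((y, A) :: G) c] (Seq R ((x, Dia A) :: G) c).
Proof.
  intros Hy Hf.
  destruct (proj1 (proj2 Hf) x (Dia A) (or_introl eq_refl)) as [v [Hxv HA]].
  set (f' := update f y v).
  assert (Hagree : forall z, occurs z (Seq R ((x, Dia A) :: G) c) -> f' z = f z)
    by exact (update_fresh f y v _ Hy).
  destruct (refutes_agree f f' _ Hagree Hf) as [HR' [HG' Hgoal']].
  exists (Seq ((x, y) :: R) ((y, A) :: G) c), f'; split; [left; reflexivity |].
  split; [| intros z Hz; rewrite Hagree by exact Hz; apply le_n].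
  repeat split; simpl; [| | exact Hgoal'].
  - intros a b [E | Hab]; [injection E as <- <- | apply HR', Hab].
    unfold f' at 2; rewrite update_at, Hagree; [exact Hxv |].
    right; left; exists (x, Dia A); simpl; auto.
  - intros z B [E | Hz]; [injection E as <- <-; unfold f'; now rewrite update_at |].
    apply HG'; right; exact Hz.
Qed.

Ltac keep_assignment s :=
  apply (refutes_premise_same _ s); [simpl; auto |];
  unfold refutes, rel_holds, ctx_holds in *; simpl in *.

Lemma rule_refutation f prems c :
  rule prems c -> refutes f c -> refutes_premise f prems c.
Proof.
  intros Hrule Hc; destruct Hrule;
    try (apply boxR_refutation || apply diaL_refutation || apply impR_refutation; assumption);
    pose proof Hc as [HR [HG Hgoal]]; unfold rel_holds, ctx_holds in HR, HG; simpl in *.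
  - keep_assignment (Seq R' G' c); repeat split; auto.
    + intros a b Hab; apply HR, (Permutation_in _ (Permutation_sym H)), Hab.
    + intros z A Hz; apply HG, (Permutation_in _ (Permutation_sym H0)), Hz.
  - keep_assignment (Seq R G c); repeat split; auto.
  - keep_assignment (Seq R G c); repeat split; auto.
  - keep_assignment (Seq R (a :: a :: G) c); repeat split; auto.
    intros z A [E | [E | Hz]]; apply HG; auto.
  - keep_assignment (Seq (r :: r :: R) G c); repeat split; auto.
    intros a b [E | [E | Hab]]; apply HR; auto.
  - destruct a as [z A]; destruct (classic (sat M (f z) A)) as [HA | HA].
    + keep_assignment (Seq R ((z, A) :: G) c); repeat split; auto.
      intros z' A' [E | Hz]; [injection E as <- <-; exact HA | auto].
    + keep_assignment (Seq R G (z, A)); repeat split; auto.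
  - keep_assignment (Seq ((x, z) :: (x, y) :: (y, z) :: R) G c); repeat split; auto.
    intros a b [E | Hab]; [injection E as <- <-; apply (M_trans _ (f y)); apply HR; auto | auto].
  - exfalso; exact (Hgoal (HG x (Var p) (or_introl eq_refl))).
  - exfalso; exact (HG x Bot (or_introl eq_refl)).
  - destruct (HG x (And A B) (or_introl eq_refl)) as [HA HB].
    keep_assignment (Seq R ((x, A) :: (x, B) :: G) c); repeat split; auto.
    intros z C [E | [E | Hz]]; try (injection E as <- <-); auto.
  - destruct (classic (sat M (f x) A)) as [HA | HA].
    + keep_assignment (Seq R G (x, B)); repeat split; auto.
    + keep_assignment (Seq R G (x, A)); repeat split; auto.
  - destruct (HG x (Or A B) (or_introl eq_refl)) as [HA | HB].
    + keep_assignment (Seq R ((x, A) :: G) c); repeat split; auto.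
      intros z C [E | Hz]; [injection E as <- <-; exact HA | auto].
    + keep_assignment (Seq R ((x, B) :: G) c); repeat split; auto.
      intros z C [E | Hz]; [injection E as <- <-; exact HB | auto].
  - keep_assignment (Seq R G (x, A)); repeat split; auto.
  - keep_assignment (Seq R G (x, B)); repeat split; auto.
  - pose proof (HG x (Imp A B) (or_introl eq_refl)) as Himp; simpl in Himp.
    destruct (classic (sat M (f x) A)) as [HA | HA].
    + keep_assignment (Seq R ((x, B) :: G) c); repeat split; auto.
      intros z C [E | Hz]; [injection E as <- <-; apply Himp; auto using M_le_refl | auto].
    + keep_assignment (Seq R G (x, A)); repeat split; auto.
  - pose proof (HG x (Box A) (or_introl eq_refl)) as Hbox; simpl in Hbox.
    keep_assignment (Seq ((x, y) :: R) ((y, A) :: G) c); repeat split; auto.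
    intros z C [E | Hz]; [injection E as <- <-; eauto using M_le_refl | auto].
  - keep_assignment (Seq ((x, y) :: R) G (y, A)); repeat split; auto.
    intro HA; apply Hgoal; exists (f y); auto.
Qed.

Definition refuted_at (T : ptree) (st : list nat * (label -> W M)) : Prop :=
  valid_pos T (fst st) /\ refutes (snd st) (node T (fst st)).

Lemma refuted_child T p f : locally_correct T -> refuted_at T (p, f) ->
  exists c : nat * (label -> W M),
    refuted_at T (fst c :: p, snd c) /\ no_higher f (snd c) (node T p).
Proof.
  intros HT [Hp Hf].
  destruct (rule_refutation f _ _ (HT p Hp) Hf) as [s [f' [Hin [Hs Hh]]]].
  apply in_map_iff in Hin as [i [<- Hi]]; apply in_seq in Hi.
  exists (i, f'); split; [split; [split; [exact Hp | simpl; lia] | exact Hs] | exact Hh].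
Qed.

Lemma refuted_branch T f : locally_correct T -> refutes f (node T []) ->
  exists (b : nat -> nat) (fs : nat -> label -> W M), is_branch T b /\
    forall n, refutes (fs n) (node T (branch_pos b n)) /\
      no_higher (fs n) (fs (S n)) (node T (branch_pos b n)).
Proof.
  intros HT Hroot.
  pose (St := sig (refuted_at T)).
  assert (Hchild : forall st : St, {c : nat * (label -> W M) |
     refuted_at T (fst c :: fst (proj1_sig st), snd c) /\
     no_higher (snd (proj1_sig st)) (snd c) (node T (fst (proj1_sig st)))}).
  { intros [[p g] Hpg]; apply constructive_indefinite_description.
    exact (refuted_child T p g HT Hpg). }
  pose (next := fun st : St =>
    exist _ (fst (proj1_sig (Hchild st)) :: fst (proj1_sig st), snd (proj1_sig (Hchild st)))
      (proj1 (proj2_sig (Hchild st))) : St).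
  pose (root := exist _ ([], f) (conj I Hroot) : St).
  pose (path := fix path n : St := match n with 0 => root | S m => next (path m) end).
  pose (b := fun n => fst (proj1_sig (Hchild (path n)))).
  assert (Hpos : forall n, branch_pos b n = fst (proj1_sig (path n))).
  { induction n as [|n IH]; [reflexivity | simpl; now rewrite IH]. }
  exists b, (fun n => snd (proj1_sig (path n))); split.
  - intros n; rewrite Hpos; apply (proj1 (proj2_sig (Hchild (path n)))).
  - intros n; rewrite Hpos; split; [apply (proj2_sig (path n)) |].
    apply (proj2 (proj2_sig (Hchild (path n)))).
Qed.

(* Refuted sequents have no oo-proof: along the refuted branch a trace's
   depths never increase and strictly drop at every R-step. *)
Theorem refuted_not_provable s f : refutes f s -> ~ labIGL_provable s.
Proof.
  intros Hs [T [[HT Htrace] <-]].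
  destruct (refuted_branch T f HT Hs) as [b [fs [Hb Hfs]]].
  destruct (Htrace b Hb) as [k [x [Hocc [Hsucc Hinf]]]]; cbv zeta in *.
  assert (Hdesc : forall n, k <= n ->
      In (x n, x (S n)) (srel (node T (branch_pos b (S n)))) ->
      h (fs (S n) (x (S n))) < h (fs n (x n))).
  { intros n Hkn Hrel.
    pose proof (h_rel _ _ (proj1 (proj1 (Hfs (S n))) _ _ Hrel)).
    pose proof (proj2 (Hfs n) (x n) (Hocc n Hkn)); lia. }
  apply (no_infinite_descent (fun n => h (fs n (x n))) k).
  - intros n Hkn; destruct (Hsucc n Hkn) as [E | Hrel].
    + rewrite E; apply (proj2 (Hfs n)), Hocc, Hkn.
    + apply Nat.lt_le_incl, Hdesc; assumption.
  - intros m; destruct (Hinf m) as [n [Hmn [Hkn Hrel]]].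
    exists n; auto.
Qed.

End Refutation.

Inductive world : Type := w_lo | w_hi | v_lo | v_hi | u_top.

Definition world_le (a b : world) : Prop :=
  match a, b with
  | w_lo, w_lo | w_lo, w_hi | w_hi, w_hi
  | v_lo, v_lo | v_lo, v_hi | v_hi, v_hi | u_top, u_top => True
  | _, _ => False
  end.

Definition world_rel (a b : world) : Prop :=
  match a, b with
  | w_lo, v_lo | w_hi, v_hi | w_hi, u_top | v_hi, u_top => True
  | _, _ => False
  end.

Definition world_val (a : world) (_ : nat) : Prop :=
  match a with w_lo | w_hi => False | _ => True end.

Definition counter_model : bmodel := BModel world world_le world_rel world_val.

(* Length of the longest R-path from a world. *)
Definition depth (a : world) : nat :=
  match a with w_lo | w_hi => 2 | v_lo | v_hi => 1 | u_top => 0 end.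

(* The ≤-upgrade, an R-homomorphism lying above the identity. *)
Definition raise (a : world) : world :=
  match a with w_lo => w_hi | v_lo => v_hi | a => a end.

Ltac some_world :=
  first [ solve [exists w_lo; simpl; auto] | solve [exists w_hi; simpl; auto]
        | solve [exists v_lo; simpl; auto] | solve [exists v_hi; simpl; auto]
        | solve [exists u_top; simpl; auto] ].

Lemma counter_birelational : is_birelational counter_model.
Proof.
  unfold is_birelational; simpl; repeat split.
  - exact w_lo.
  - intros []; exact I.
  - intros [] [] []; simpl; tauto.
  - intros [] []; simpl; tauto.
  - intros [] [] []; simpl; try tauto; intros _ _; some_world.
  - intros [] [] []; simpl; try tauto; intros _ _; some_world.
  - intros [] [] q; simpl; tauto.
Qed.

Lemma counter_transitive (a b c : world) :
  world_rel a b -> world_rel b c -> world_rel a c.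
Proof. destruct a, b, c; simpl; tauto. Qed.

Lemma depth_rel (a b : world) : world_rel a b -> depth b < depth a.
Proof. destruct a, b; simpl; tauto || lia. Qed.

Lemma depth_le (a b : world) : world_le a b -> depth b <= depth a.
Proof. destruct a, b; simpl; tauto || lia. Qed.

(* Lifting along ≤: either nothing moves or every world is upgraded. *)
Lemma counter_lift (f : label -> world) x w' : world_le (f x) w' ->
  exists g, g x = w' /\
    (forall a b, world_rel (f a) (f b) -> world_rel (g a) (g b)) /\
    (forall z, world_le (f z) (g z)).
Proof.
  intros Hle.
  assert (Hw' : w' = f x \/ w' = raise (f x)) by (destruct (f x), w'; simpl in *; tauto).
  destruct Hw' as [-> | ->].
  - exists f; repeat split; auto. intros z; destruct (f z); exact I.
  - exists (fun z => raise (f z)); repeat split.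
    + intros a b; destruct (f a), (f b); simpl; tauto.
    + intros z; destruct (f z); exact I.
Qed.

(* w_lo |= <>p via v_lo, but v_lo |/= []~p since v_lo ≤ v_hi R u_top. *)
Lemma counter_refutes (p : nat) : ~ sat counter_model w_lo (phi16 p).
Proof.
  simpl; intros H.
  destruct (H w_lo I) as [v [Hv [_ Hbox]]]; [exists v_lo; simpl; auto |].
  destruct v; simpl in Hv; try tauto.
  exact (Hbox v_hi u_top I I u_top I I).
Qed.

Theorem mainTheorem16 (p : nat) :
  (exists (M : bmodel) (w : W M), is_BIGL M /\ ~ sat M w (phi16 p)) /\
  (forall x : label, ~ labIGL_provable (Seq [] [] (x, phi16 p))).
Proof.
  split.
  - exists counter_model, w_lo; split; [| apply counter_refutes].
    exact (BIGL_of_depth counter_model counter_birelational counter_transitive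
             depth depth_rel depth_le).
  - intros x.
    apply (refuted_not_provable counter_model counter_birelational counter_transitive
             depth depth_rel depth_le counter_lift _ (fun _ => w_lo)).
    split; [intros a b [] | split; [intros z A [] | exact (counter_refutes p)]].
Qed.
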